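(* Let $R$ be a commutative ring with nonzero identity and $\delta$ an expansion of ideals of $R$. Then $\sqrt{0}$ is a $\delta$-$n$-ideal of $R$ if and only if every zero-divisor of the quotient ring $R/\sqrt{0}$ is $\delta_q$-nilpotent.
   Context: An expansion of ideals of a ring $R$ is a map $\delta$ from the set of ideals of $R$ to itself such that $I\subseteq\delta(I)$ for every ideal $I$, and $\delta(I)\subseteq\delta(J)$ whenever $I\subseteq J$. $\sqrt{0}$ denotes the nilradical of $R$. Given an expansion $\delta$, a proper ideal $I$ of $R$ is a $\delta$-$n$-ideal if whenever $a,b\in R$ with $ab\in I$ and $a\notin\sqrt{0}$, then $b\in\delta(I)$. The expansion $\delta_q$ of ideals of $R/\sqrt{0}$ is defined by $\delta_q(J/\sqrt{0})=\delta(J)/\sqrt{0}$ for ideals $J\supseteq\sqrt{0}$ of $R$. An element $x$ of $R/\sqrt{0}$ is $\delta_q$-nilpotent if $x\in\delta_q(0_{R/\sqrt{0}})$. A zero-divisor $\bar a$ of $R/\sqrt{0}$ is an element with $\bar a\bar b=0$ for some nonzero $\bar b\in R/\sqrt{0}$. *)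

From HB Require Import structures.
From mathcomp Require Import all_boot all_order all_algebra.
Set Implicit Arguments. Unset Strict Implicit. Unset Printing Implicit Defensive.
Import GRing.Theory.
Local Open Scope ring_scope.

Definition is_ideal (R : comNzRingType) (I : R -> Prop) : Prop :=
  [/\ I 0, (forall x y, I x -> I y -> I (x + y)) & (forall r x, I x -> I (r * x))].

Definition proper_ideal (R : comNzRingType) (I : R -> Prop) : Prop :=
  is_ideal I /\ ~ I 1.

Definition subideal (R : comNzRingType) (I J : R -> Prop) : Prop :=
  forall x, I x -> J x.

Definition expansion (R : comNzRingType) (delta : (R -> Prop) -> (R -> Prop)) : Prop :=
  [/\ (forall I, is_ideal I -> is_ideal (delta I)),
      (forall I, is_ideal I -> subideal I (delta I)) &
      (forall I J, is_ideal I -> is_ideal J -> subideal I J ->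
                   subideal (delta I) (delta J))].

Definition nilrad (R : comNzRingType) : R -> Prop :=
  fun x => exists n : nat, x ^+ n = 0.

Definition delta_n_ideal (R : comNzRingType) (delta : (R -> Prop) -> (R -> Prop))
  (I : R -> Prop) : Prop :=
  proper_ideal I /\
  forall a b : R, I (a * b) -> ~ nilrad a -> delta I b.

(* Given a presentation pi : R ->> S of the quotient ring R/sqrt(0),
   delta_q (J) = pi (delta (pi^-1 J)), i.e. delta_q(J'/sqrt0) = delta(J')/sqrt0. *)
Definition delta_q (R S : comNzRingType) (pi : R -> S)
  (delta : (R -> Prop) -> (R -> Prop)) (J : S -> Prop) : S -> Prop :=
  fun y => exists x, delta (fun r => J (pi r)) x /\ pi x = y.

Definition zero_divisor (S : comNzRingType) (a : S) : Prop :=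
  exists b : S, b != 0 /\ a * b = 0.

Definition delta_q_nilpotent (R S : comNzRingType) (pi : R -> S)
  (delta : (R -> Prop) -> (R -> Prop)) (x : S) : Prop :=
  delta_q pi delta (fun y => y = 0) x.

(* Write N for the nilradical and K for the kernel of pi, which equals N.
   Since pi identifies S with R / N, pi b is a zero-divisor exactly when
   a b is nilpotent for some non-nilpotent a, and pi b is delta_q-nilpotent
   exactly when b lies in delta(K) = delta(N): membership in delta(K) only
   depends on the class modulo K, because K is contained in the ideal
   delta(K). The two conditions of the theorem are therefore the same
   statement read in R and in S. *)

From HB Require Import structures.
From mathcomp Require Import all_boot all_order all_algebra.
(* Imported last, so that [proper_ideal] is the one of Defs, not of ssralg. *)
From Pilot Require Import Defs.
Set Implicit Arguments. Unset Strict Implicit. Unset Printing Implicit Defensive.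
Import GRing.Theory.
Local Open Scope ring_scope.

Lemma expr_eq0_leq (R : pzSemiRingType) (x : R) (m k : nat) :
  (m <= k)%N -> x ^+ m = 0 -> x ^+ k = 0.
Proof. by move=> le_mk xm0; rewrite -(subnKC le_mk) exprD xm0 mul0r. Qed.

Lemma is_ideal_nilrad (R : comNzRingType) : is_ideal (@nilrad R).
Proof.
split; first by exists 1%N; rewrite expr1.
- move=> x y [m xm0] [n yn0]; exists (m + n)%N.
  rewrite exprDn big1 // => i _.
  have [lt_in | le_ni] := ltnP i n.
    have le_m : (m <= m + n - i)%N by rewrite -addnBA ?leq_addr // ltnW.
    by rewrite (expr_eq0_leq le_m xm0) mul0r mul0rn.
  by rewrite (expr_eq0_leq le_ni yn0) mulr0 mul0rn.
- by move=> r x [n xn0]; exists n; rewrite exprMn xn0 mulr0.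
Qed.

Lemma proper_ideal_nilrad (R : comNzRingType) : proper_ideal (@nilrad R).
Proof.
split; first exact: is_ideal_nilrad.
by move=> [n]; rewrite expr1n; apply/eqP; rewrite oner_eq0.
Qed.

Lemma is_ideal_kernel (R S : comNzRingType) (f : {rmorphism R -> S}) :
  is_ideal (fun r => f r = 0).
Proof.
split.
- by rewrite rmorph0.
- by move=> x y fx0 fy0; rewrite rmorphD fx0 fy0 addr0.
- by move=> r x fx0; rewrite rmorphM fx0 mulr0.
Qed.

Section Expansion.

Variables (R : comNzRingType) (delta : (R -> Prop) -> (R -> Prop)).
Hypothesis delta_exp : expansion delta.

Lemma expansion_eq (I J : R -> Prop) :
  is_ideal I -> is_ideal J -> (forall x, I x <-> J x) ->
  forall x, delta I x <-> delta J x.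
Proof.
case: delta_exp => _ _ delta_mono idI idJ eqIJ x.
by split; apply: delta_mono => // y /eqIJ.
Qed.

Lemma expansion_addr (I : R -> Prop) (x y : R) :
  is_ideal I -> delta I x -> I y -> delta I (x + y).
Proof.
case: delta_exp => delta_ideal delta_ext _ idI dx Iy.
by case: (delta_ideal _ idI) => _ deltaD _; apply: deltaD => //; apply: delta_ext.
Qed.

End Expansion.

Section NilradicalQuotient.

Variables (R S : comNzRingType) (delta : (R -> Prop) -> (R -> Prop)).
Variable pi : {rmorphism R -> S}.
Hypothesis delta_exp : expansion delta.
Hypothesis pi_surj : forall y : S, exists x : R, pi x = y.
Hypothesis pi_ker : forall x : R, pi x = 0 <-> nilrad x.

Lemma zero_divisor_rmorph (b : R) :
  zero_divisor (pi b) <-> exists2 a : R, ~ nilrad a & nilrad (a * b).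
Proof.
split=> [[c [c_neq0 bc0]] | [a a_nnil ab_nil]].
  have [a pa] := pi_surj c; exists a.
    by move/pi_ker; rewrite pa => /eqP; rewrite (negbTE c_neq0).
  by apply/pi_ker; rewrite rmorphM pa mulrC.
exists (pi a); split; first by apply/eqP => /pi_ker.
by rewrite mulrC -rmorphM; apply/pi_ker.
Qed.

Lemma delta_q_nilpotent_rmorph (b : R) :
  delta_q_nilpotent pi delta (pi b) <-> delta (@nilrad R) b.
Proof.
have delta_ker := expansion_eq delta_exp (is_ideal_kernel pi) (@is_ideal_nilrad R) pi_ker.
split=> [[x [dx pxb]] | db]; last by exists b; split => //; apply/delta_ker.
apply/delta_ker; rewrite -(subrK x b) addrC.
apply: (expansion_addr delta_exp (is_ideal_kernel pi) dx).
by rewrite rmorphB pxb subrr.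
Qed.

End NilradicalQuotient.

Theorem proposition2p15 (R : comNzRingType) (delta : (R -> Prop) -> (R -> Prop))
  (S : comNzRingType) (pi : {rmorphism R -> S}) :
  expansion delta ->
  (forall y : S, exists x : R, pi x = y) ->
  (forall x : R, pi x = 0 <-> nilrad x) ->
  (delta_n_ideal delta (@nilrad R) <->
   forall a : S, zero_divisor a -> delta_q_nilpotent pi delta a).
Proof.
move=> delta_exp pi_surj pi_ker.
split=> [[_ nideal] y | zd_nil].
  have [b <-] := pi_surj y.
  move/(zero_divisor_rmorph pi_surj pi_ker) => [a a_nnil ab_nil].
  by apply/(delta_q_nilpotent_rmorph delta_exp pi_ker); apply: nideal ab_nil a_nnil.
split=> [|a b ab_nil a_nnil]; first exact: proper_ideal_nilrad.
apply/(delta_q_nilpotent_rmorph delta_exp pi_ker); apply: zd_nil.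
by apply/(zero_divisor_rmorph pi_surj pi_ker); exists a.
Qed.
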